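(* Let $G$ be a graph with vertices $a,b,c,d$. When the Laplacian $L$ of $G$ is used as Hamiltonian, there is no perfect state transfer between $e_a+e_b$ and $e_c-e_d$; that is, there are no $t\ge 0$ and $\gamma\in\mathbb{C}$ with $|\gamma|=1$ such that $\exp(itL)(e_a+e_b)=\gamma(e_c-e_d)$ or $\exp(itL)(e_c-e_d)=\gamma(e_a+e_b)$.
   Context: $L=\Delta-A$ where $\Delta$ is the degree matrix and $A$ the adjacency matrix of $G$; $e_v$ is the standard basis vector of vertex $v$. *)

From HB Require Import structures.
From mathcomp Require Import all_boot all_order all_algebra.
From mathcomp Require Import all_classical all_reals all_analysis.
From mathcomp Require Import complex.
Set Implicit Arguments. Unset Strict Implicit. Unset Printing Implicit Defensive.
Import Order.TTheory GRing.Theory Num.Theory numFieldNormedType.Exports.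
Local Open Scope ring_scope.
Local Open Scope complex_scope.

Definition simple_graph (n : nat) (adj : rel 'I_n) : Prop :=
  symmetric adj /\ irreflexive adj.

Definition deg (n : nat) (adj : rel 'I_n) (v : 'I_n) : nat :=
  #|[set w | adj v w]|.

Definition laplacian (R : rcfType) (n : nat) (adj : rel 'I_n) : 'M[R[i]]_n :=
  \matrix_(u, v) ((u == v)%:R * (deg adj u)%:R - (adj u v)%:R).

Definition evec (R : rcfType) (n : nat) (v : 'I_n) : 'cV[R[i]]_n :=
  delta_mx v 0.

Definition expmx (R : realType) (n : nat) (M : 'M[R[i]]_n) : 'M[R[i]]_n :=
  limn (fun N : nat => \sum_(k < N) ((k`!)%:R)^-1 *: M ^+ k).

From HB Require Import structures.
From mathcomp Require Import all_boot all_order all_algebra.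
From mathcomp Require Import all_classical all_reals all_analysis.
From mathcomp Require Import complex.
Set Implicit Arguments. Unset Strict Implicit. Unset Printing Implicit Defensive.
Import Order.TTheory GRing.Theory Num.Theory numFieldNormedType.Exports.
Local Open Scope ring_scope.
Local Open Scope complex_scope.
Local Open Scope classical_set_scope.

(* The all-ones row vector is a left null vector of L, so every power series
   in L -- in particular exp(itL) -- preserves the sum of the entries of a
   vector.  The entries of e_a + e_b sum to 2, those of e_c - e_d to 0, and a
   unimodular scalar cannot bridge the two. *)

Lemma mulmx_ones_laplacian (R : rcfType) n (adj : rel 'I_n) :
  symmetric adj -> (const_mx 1 : 'rV[R[i]]_n) *m laplacian R adj = 0.
Proof.
move=> adjC; apply/rowP => w; rewrite !mxE.
under eq_bigr do rewrite !mxE mul1r.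
rewrite sumrB (bigD1 w) //= eqxx mul1r big1 => [|u /negPf->]; last by rewrite mul0r.
rewrite addr0 -natr_sum /deg cardsE -sum1_card big_mkcond /=.
apply/eqP; rewrite subr_eq0; apply/eqP; congr _%:R.
by apply: eq_bigr => u _; rewrite adjC unfold_in; case: (adj w u).
Qed.

Lemma cvg_mulmx_coord (K : numFieldType) T (F : set_system T) {FF : Filter F}
    m n p (A : 'M[K]_(m, n)) (f : T -> 'M[K]_(n, p)) (X : 'M[K]_(n, p)) i j :
  f @ F --> X -> (A *m f x) i j @[x --> F] --> (A *m X) i j.
Proof.
move=> fX; rewrite mxE; under eq_cvg do rewrite mxE.
apply: cvg_big => [|k _]; first exact: add_continuous.
by apply: cvgMl_tmp; apply: cvg_comp fX (@coord_continuous K n p k j X).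
Qed.

Section MatrixExponential.
Variables (R : realType) (n : nat) (M : 'M[R[i]]_n).

Definition expmx_partial (N : nat) : ('M[R[i]]_n : normedModType R[i]) :=
  \sum_(k < N) ((k`!)%:R)^-1 *: M ^+ k.

(* [expmx] is a [lim], which defaults to [0] when the series diverges. *)
Lemma expmx_partial_cvg_or_0 : cvgn expmx_partial \/ expmx M = 0.
Proof.
have [cvgS|dvgS] := pselect (cvgn expmx_partial); [by left | right].
by rewrite /expmx (dvgP dvgS); apply/matrixP => i j; rewrite !mxE.
Qed.

Lemma mulmx_expmx_partial (u : 'rV[R[i]]_n) N :
  u *m M = 0 -> u *m expmx_partial N.+1 = u.
Proof.
move=> uM0; rewrite mulmx_sumr big_ord_recl /= expr0 fact0 invr1 scale1r.
rewrite -[1]/(1%:M) mulmx1 big1 ?addr0 // => k _.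
by rewrite -scalemxAr exprS -mulmxE mulmxA uM0 mul0mx scaler0.
Qed.

Lemma mulmx_expmx_fixed_or_0 (u : 'rV[R[i]]_n) :
  u *m M = 0 -> u *m expmx M = u \/ expmx M = 0.
Proof.
move=> uM0; have [cvgS|] := expmx_partial_cvg_or_0; [left | by right].
apply/rowP => w.
have uS : \forall N \near \oo, (u *m expmx_partial N) 0 w = u 0 w.
  by near=> N; rewrite -(prednK (_ : 0 < N)%N) ?mulmx_expmx_partial //; near: N; exists 1%N.
exact: cvg_unique _ (cvg_mulmx_coord (A := u) (i := 0) (j := w) cvgS)
  (cvg_near_cst (u 0 w : R[i] : numFieldType) uS).
Unshelve. all: by end_near.
Qed.

End MatrixExponential.

Theorem mainTheorem8 (R : realType) (n : nat) (adj : rel 'I_n)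
    (a b c d : 'I_n) :
  simple_graph adj -> a != b -> c != d ->
  ~ (exists (t : R) (g : R[i]), 0 <= t /\ `|g| = 1 /\
       (expmx ('i * t%:C *: laplacian R adj) *m (evec R a + evec R b)
          = g *: (evec R c - evec R d)
        \/
        expmx ('i * t%:C *: laplacian R adj) *m (evec R c - evec R d)
          = g *: (evec R a + evec R b))).
Proof.
move=> [adjC _] ab cd [t [g [_ [g1 H]]]].
have g0 : g != 0 by rewrite -normr_eq0 g1 oner_neq0.
pose ones := const_mx 1 : 'rV[R[i]]_n.
have ones_evec v : ones *m evec R v = const_mx 1 by rewrite /evec -colE col_const.
have sum_ab : ones *m (evec R a + evec R b) != 0.
  rewrite mulmxDr !ones_evec; apply/eqP => /matrixP/(_ 0 0); rewrite !mxE.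
  by apply/eqP; rewrite -mulr2n pnatr_eq0.
have sum_cd : ones *m (evec R c - evec R d) = 0 by rewrite mulmxBr !ones_evec subrr.
have cd0 : evec R c - evec R d != 0.
  by apply/eqP => /matrixP/(_ c 0); rewrite !mxE eqxx (negPf cd) subr0 => /eqP; rewrite oner_eq0.
have onesL : ones *m ('i * t%:C *: laplacian R adj) = 0.
  by rewrite -scalemxAr mulmx_ones_laplacian ?scaler0.
have ab0 : evec R a + evec R b != 0 by apply: contraNneq sum_ab => ->; rewrite mulmx0.
have [onesE | E0] := mulmx_expmx_fixed_or_0 onesL; case: H.
- move/(congr1 (mulmx ones)); rewrite mulmxA onesE -scalemxAr sum_cd scaler0.
  exact/eqP.
- move/(congr1 (mulmx ones)); rewrite mulmxA onesE -scalemxAr sum_cd => /esym/eqP.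
  by rewrite scaler_eq0 (negPf g0) (negPf sum_ab).
- by rewrite E0 mul0mx => /esym/eqP; rewrite scaler_eq0 (negPf g0) (negPf cd0).
- by rewrite E0 mul0mx => /esym/eqP; rewrite scaler_eq0 (negPf g0) (negPf ab0).
Qed.
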